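(* (1) Let $f\colon Z\to X$ be a fibration, with basepoints $\dagger\in Z$, $*\in X$. Then the biset of $f$ can be described as \[B(f)=\{\beta\colon[0,1]\to Z\mid\beta(0)=\dagger,\ f(\beta(1))=*\}/{\sim},\] where $\beta\sim\beta'$ if and only if there is a path $\varepsilon\colon[0,1]\to f^{-1}( * )$ from $\beta(1)$ to $\beta'(1)$ such that $\beta\#\varepsilon$ is homotopic (rel endpoints) to $\beta'$. (2) Let $(Z,f,i)$ be a correspondence from $Y$ to $X$ with $f$ fibrant and basepoints $\dagger\in Y$, $*\in X$. Then in the triple description of $B(f,i)$ one may assume that $\gamma$ is constant, and \[B(f,i)=\{(\delta\colon[0,1]\to Y,\ p\in Z)\mid\delta(0)=\dagger,\ \delta(1)=i(p),\ f(p)=*\}/{\sim},\] where $(\delta,p)\sim(\delta',p')$ if and only if there is a path $\varepsilon\colon[0,1]\to f^{-1}( * )$ from $p$ to $p'$ such that $\delta\#i(\varepsilon)$ is homotopic to $\delta'$.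
   Context: For a continuous map $f\colon Z\to X$ and basepoints $\dagger\in Z$, $*\in X$, the biset $B(f)=B(f,\dagger,* )$ is the set of homotopy classes rel endpoints of paths $\gamma$ in $X$ from $f(\dagger)$ to $*$, a $\pi_1(Z,\dagger)$-$\pi_1(X,* )$-biset via $[\lambda]\cdot[\gamma]=[f\circ\lambda\#\gamma]$ and $[\gamma]\cdot[\mu]=[\gamma\#\mu]$. For a correspondence $(Z,f,i)$ from $Y$ to $X$ ($f\colon Z\to X$, $i\colon Z\to Y$), $B(f,i)$ is the set of triples $(\delta,p,\gamma)$ with $p\in Z$, $\delta$ a path in $Y$ from $\dagger$ to $i(p)$, $\gamma$ a path in $X$ from $f(p)$ to $*$, modulo homotopy of triples (with $p$ moving continuously, outer endpoints fixed). A fibration is a map with the homotopy lifting property with respect to all spaces. $\#$ denotes concatenation of paths. *)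

From HB Require Import structures.
From mathcomp Require Import all_boot all_order all_algebra.
From mathcomp Require Import all_classical all_reals all_analysis.
From mathcomp Require Import Rstruct Rstruct_topology.
From Stdlib Require Import Rdefinitions.

Set Implicit Arguments.
Unset Strict Implicit.
Unset Printing Implicit Defensive.

Import Order.TTheory GRing.Theory Num.Theory.
Local Open Scope classical_set_scope.
Local Open Scope ring_scope.

Definition I01 : set R := `[0%R, 1%R].

(* Paths are functions R -> X whose restriction to [0,1] is continuous
   (values outside [0,1] are irrelevant). *)
Definition is_path {X : topologicalType} (g : R -> X) : Prop :=
  {within I01, continuous g}.

Definition path_from_to {X : topologicalType} (g : R -> X) (x y : X) : Prop :=
  is_path g /\ g 0 = x /\ g 1 = y.

Definition concat {X : topologicalType} (g h : R -> X) : R -> X :=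
  fun t => if t <= 1 / 2 then g (2 * t) else h (2 * t - 1).

(* Homotopy rel endpoints: H(s,t), s the homotopy parameter, t the path
   parameter; H(0,.) = g, H(1,.) = h, endpoints fixed. *)
Definition homotopic_rel {X : topologicalType} (g h : R -> X) : Prop :=
  exists H : R * R -> X,
    {within I01 `*` I01, continuous H} /\
    (forall t, I01 t -> H (0, t) = g t /\ H (1, t) = h t) /\
    (forall s, I01 s -> H (s, 0) = g 0 /\ H (s, 1) = g 1).

Definition fibration {Z X : topologicalType} (f : Z -> X) : Prop :=
  forall (W : topologicalType) (h : W -> Z) (H : W * R -> X),
    continuous h ->
    {within [set: W] `*` I01, continuous H} ->
    (forall w, H (w, 0) = f (h w)) ->
    exists Ht : W * R -> Z,
      {within [set: W] `*` I01, continuous Ht} /\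
      (forall w, Ht (w, 0) = h w) /\
      (forall w t, I01 t -> f (Ht (w, t)) = H (w, t)).

Definition fibre_path {Z X : topologicalType} (f : Z -> X) (star : X)
  (e : R -> Z) (p p' : Z) : Prop :=
  path_from_to e p p' /\ (forall t, I01 t -> f (e t) = star).

Definition beta_ok {Z X : topologicalType} (f : Z -> X) (dag : Z) (star : X)
  (b : R -> Z) : Prop :=
  is_path b /\ b 0 = dag /\ f (b 1) = star.

Definition beta_rel {Z X : topologicalType} (f : Z -> X) (star : X)
  (b b' : R -> Z) : Prop :=
  exists e : R -> Z, fibre_path f star e (b 1) (b' 1) /\
    homotopic_rel (concat b e) b'.

Definition triple_ok {Z X Y : topologicalType} (f : Z -> X) (i : Z -> Y)
  (dag : Y) (star : X) (d : R -> Y) (p : Z) (g : R -> X) : Prop :=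
  path_from_to d dag (i p) /\ path_from_to g (f p) star.

Definition triple_homotopic {Z X Y : topologicalType} (f : Z -> X) (i : Z -> Y)
  (dag : Y) (star : X) (d : R -> Y) (p : Z) (g : R -> X)
  (d' : R -> Y) (p' : Z) (g' : R -> X) : Prop :=
  exists (Hd : R * R -> Y) (P : R -> Z) (Hg : R * R -> X),
    {within I01 `*` I01, continuous Hd} /\ is_path P /\
    {within I01 `*` I01, continuous Hg} /\
    (forall t, I01 t -> Hd (0, t) = d t /\ Hd (1, t) = d' t /\
                        Hg (0, t) = g t /\ Hg (1, t) = g' t) /\
    P 0 = p /\ P 1 = p' /\
    (forall s, I01 s -> Hd (s, 0) = dag /\ Hd (s, 1) = i (P s) /\
                        Hg (s, 0) = f (P s) /\ Hg (s, 1) = star).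

Definition pair_ok {Z X Y : topologicalType} (f : Z -> X) (i : Z -> Y)
  (dag : Y) (star : X) (d : R -> Y) (p : Z) : Prop :=
  path_from_to d dag (i p) /\ f p = star.

Definition pair_rel {Z X Y : topologicalType} (f : Z -> X) (i : Z -> Y)
  (star : X) (d : R -> Y) (p : Z) (d' : R -> Y) (p' : Z) : Prop :=
  exists e : R -> Z, fibre_path f star e p p' /\
    homotopic_rel (concat d (i \o e)) d'.

(* Everything rests on two uses of the homotopy lifting property. Lifting
   paths: a path from f(dag) to star lifts to some b, and lifting the gamma of a
   triple (delta, p, gamma) to a path c from p trades the triple for
   (delta # i o c, c 1, const). Lifting squares: a homotopy rel endpoints from
   f o b to f o b' folds into a square of X whose bottom edge is
   f o (reverse b # const # b') and whose other three edges sit at star; lifted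
   along its bottom edge, it becomes a square of Z whose other three edges lie
   in the fibre and form the path e, and convexity of the square makes b # e
   homotopic to b'. In (2) the gamma-part of a triple homotopy already is such
   a square, over the path traced by p. The remaining implications push
   homotopies down along f, where the fibre path e becomes constant. *)

From mathcomp Require Import all_boot all_order all_algebra.
From mathcomp Require Import all_classical all_reals all_analysis.
From mathcomp Require Import Rstruct Rstruct_topology.
From Stdlib Require Import Rdefinitions.
From mathcomp Require Import lra.

Set Implicit Arguments.
Unset Strict Implicit.
Unset Printing Implicit Defensive.

Import Order.TTheory GRing.Theory Num.Theory.
Local Open Scope classical_set_scope.
Local Open Scope ring_scope.
(* Numerals in arguments of type [R], as in [concat g h 0], must be read as ring
   elements rather than as Stdlib reals. *)
Bind Scope ring_scope with R.

Local Notation square := (I01 `*` I01).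


Lemma subspace_continuous_comp {T U V : topologicalType} (A : set T) (B : set U)
    (F : U -> V) (phi : T -> U) :
  {within B, continuous F} -> {within A, continuous phi} ->
  (forall x, A x -> B (phi x)) -> {within A, continuous (F \o phi)}.
Proof.
move=> /subspace_continuousP cF /subspace_continuousP cphi AB.
apply/subspace_continuousP => x Ax.
apply: cvg_comp (cF _ (AB _ Ax)) => S /= /(cphi x Ax) phiS.
change {near nbhs x, A `<=` phi @^-1` S}.
apply: (@filterS T (nbhs x) _ (fun y => A y -> B (phi y) -> S (phi y))) phiS.
by move=> y Sy Ay; exact: Sy Ay (AB _ Ay).
Qed.

Lemma continuous_comp_within {T U V : topologicalType} (A : set T)
    (F : U -> V) (g : T -> U) :
  continuous F -> {within A, continuous g} -> {within A, continuous (F \o g)}.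
Proof. by move=> cF cg x; exact: continuous_comp (cg x) (cF _). Qed.

(* Paths are only continuous on [0, 1]; precomposing with [clamp] yields the
   maps continuous on all of [R] that the lifting property requires. *)
Definition clamp (x : R) : R := Num.min 1 (Num.max 0 x).

Lemma continuous_clamp : continuous clamp.
Proof.
move=> x; apply: (@continuous_min R R (fun=> 1) (Num.max 0)); first exact: cst_continuous.
apply: (@continuous_max R R (fun=> 0) id); [exact: cst_continuous | exact: cvg_id].
Qed.

Section ContinuityRules.
Context {T : topologicalType}.

Lemma cont_pair {U V : topologicalType} (f : T -> U) (g : T -> V) :
  continuous f -> continuous g -> continuous (fun z => (f z, g z)).
Proof. by move=> cf cg x; apply: cvg_pair; [exact: cf | exact: cg]. Qed.

Lemma cont_fst {U V : topologicalType} (f : T -> U * V) :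
  continuous f -> continuous (fun z => (f z).1).
Proof. by move=> cf x; apply: continuous_comp (cf x) _; exact: cvg_fst. Qed.

Lemma cont_snd {U V : topologicalType} (f : T -> U * V) :
  continuous f -> continuous (fun z => (f z).2).
Proof. by move=> cf x; apply: continuous_comp (cf x) _; exact: cvg_snd. Qed.

Lemma cont_add (f g : T -> R) :
  continuous f -> continuous g -> continuous (fun z => f z + g z).
Proof. by move=> cf cg x; exact: (@continuousD R R^o T f g x (cf x) (cg x)). Qed.

Lemma cont_mul (f g : T -> R) :
  continuous f -> continuous g -> continuous (fun z => f z * g z).
Proof. by move=> cf cg x; exact: (@continuousM R T f g x (cf x) (cg x)). Qed.

Lemma cont_opp (f : T -> R) : continuous f -> continuous (fun z => - f z).
Proof. by move=> cf x; exact: (@continuousN R R^o T f x (cf x)). Qed.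

Lemma cont_clamp (f : T -> R) : continuous f -> continuous (fun z => clamp (f z)).
Proof. by move=> cf x; apply: continuous_comp (cf x) _; exact: continuous_clamp. Qed.

Lemma cont_comp {U V : topologicalType} (g : U -> V) (f : T -> U) :
  continuous g -> continuous f -> continuous (fun z => g (f z)).
Proof. by move=> cg cf x; apply: continuous_comp (cf x) (cg _). Qed.

Lemma cont_id : continuous (fun z : T => z).
Proof. by move=> x; exact: cvg_id. Qed.

Lemma cont_cst {U : topologicalType} (c : U) : continuous (fun _ : T => c).
Proof. exact: cst_continuous. Qed.

End ContinuityRules.

Ltac cont_rec := lazymatch goal with
  | |- continuous (fun z => (@?a z, @?b z)) => apply: (cont_pair (f := a) (g := b)); [cont_rec | cont_rec]
  | |- continuous (fun z => @?a z + @?b z) => apply: (cont_add (f := a) (g := b)); [cont_rec | cont_rec]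
  | |- continuous (fun z => @?a z * @?b z) => apply: (cont_mul (f := a) (g := b)); [cont_rec | cont_rec]
  | |- continuous (fun z => - @?a z) => apply: (cont_opp (f := a)); cont_rec
  | |- continuous (fun z => clamp (@?a z)) => apply: (cont_clamp (f := a)); cont_rec
  | |- continuous (fun z => fst (@?a z)) => apply: (cont_fst (f := a)); cont_rec
  | |- continuous (fun z => snd (@?a z)) => apply: (cont_snd (f := a)); cont_rec
  | |- continuous (fun z => z) => exact: cont_id
  | |- continuous (fun _ => ?c) => exact: cont_cst
  | |- _ => assumption
  end.

(* Goals may arrive eta-reduced, e.g. [continuous ( *%R 2)]; expanding them lets
   the patterns of [cont_rec] match. *)
Ltac cont := lazymatch goal with
  | |- continuous ?f => change (continuous (fun z => f z)); cbv beta; cont_rec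
  end.

Lemma I01P t : I01 t <-> 0 <= t /\ t <= 1.
Proof. by rewrite /I01 /= in_itv /=; split=> [/andP | [-> ->]]. Qed.

Lemma I01_0 : I01 0. Proof. by apply/I01P; split; lra. Qed.
Lemma I01_1 : I01 1. Proof. by apply/I01P; split; lra. Qed.

Lemma clamp_id x : 0 <= x -> x <= 1 -> clamp x = x.
Proof. by move=> x0 x1; rewrite /clamp (max_idPr x0) (min_idPr x1). Qed.

Lemma clamp_le0 x : x <= 0 -> clamp x = 0.
Proof. by move=> x0; rewrite /clamp (max_idPl x0) (min_idPr _). Qed.

Lemma clamp_ge1 x : 1 <= x -> clamp x = 1.
Proof. by move=> x1; rewrite /clamp (max_idPr _) ?(min_idPl x1) //; lra. Qed.

Lemma I01_clamp x : I01 (clamp x).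
Proof.
apply/I01P; case: (lerP x 0) => [/clamp_le0 -> | x0]; first by split; lra.
case: (lerP x 1) => [x1 | /ltW /clamp_ge1 ->]; last by split; lra.
by rewrite clamp_id //; [split; lra | exact: ltW].
Qed.

Lemma clamp_in01 t : I01 t -> clamp t = t.
Proof. by move=> /I01P [t0 t1]; exact: clamp_id. Qed.

Ltac clamp_simpl := repeat match goal with |- context[clamp ?x] =>
  first [ rewrite (@clamp_le0 x); last by lra
        | rewrite (@clamp_ge1 x); last by lra
        | rewrite (@clamp_id x); [| by lra | by lra] ] end.

Lemma is_path_clamp {X : topologicalType} (g : R -> X) :
  is_path g -> continuous (g \o clamp).
Proof.
move=> gp; apply/continuous_subspace_setT.
apply: subspace_continuous_comp gp _ (fun x _ => I01_clamp x).
exact: continuous_subspaceT continuous_clamp.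
Qed.

Lemma segment_closed (a b : R) : closed `[a, b]%classic.
Proof. exact: (@interval_closed R (BLeft a) (BRight b)). Qed.

Lemma segmentP (a b t : R) : `[a, b]%classic t <-> a <= t /\ t <= b.
Proof. by rewrite /= in_itv /=; split=> [/andP | [-> ->]]. Qed.

Lemma closed_setX {T U : topologicalType} (A : set T) (B : set U) :
  closed A -> closed B -> closed (A `*` B).
Proof.
move=> cA cB; have -> : A `*` B = fst @^-1` A `&` snd @^-1` B.
  by apply/seteqP; split=> -[a b].
apply: closedI; apply: (proj1 (continuous_closedP _)) => //.
- by apply: (@cont_fst _ T U); exact: cont_id.
- by apply: (@cont_snd _ T U); exact: cont_id.
Qed.

Lemma I01_halves : I01 = `[0, 1/2]%classic `|` `[1/2, 1]%classic.
Proof.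
apply/seteqP; split=> t; last by case=> /segmentP [? ?]; apply/I01P; split; lra.
by move=> /I01P [? ?]; case: (lerP t (1/2)) => ?; [left | right]; apply/segmentP; split; lra.
Qed.

Lemma paste_within {T U : topologicalType} (A B : set T) (f g1 g2 : T -> U) :
  closed A -> closed B -> {within A, continuous g1} -> {within B, continuous g2} ->
  (forall x, A x -> f x = g1 x) -> (forall x, B x -> f x = g2 x) ->
  {within A `|` B, continuous f}.
Proof.
move=> cA cB cg1 cg2 fg1 fg2; apply: withinU_continuous => //.
  by apply: subspace_eq_continuous cg1 => x /set_mem /fg1.
by apply: subspace_eq_continuous cg2 => x /set_mem /fg2.
Qed.

Section Concat.
Context {X : topologicalType}.
Implicit Types g h : R -> X.

Lemma concatL g h t : t <= 1/2 -> concat g h t = g (2 * t).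
Proof. by move=> ht; rewrite /concat ifT. Qed.

Lemma concatR g h t : 1/2 < t -> concat g h t = h (2 * t - 1).
Proof. by move=> ht; rewrite /concat ifF //; apply/negbTE; rewrite -ltNge. Qed.

Lemma concat0 g h : concat g h 0 = g 0.
Proof. by rewrite concatL ?mulr0 //; lra. Qed.

Lemma concat1 g h : concat g h 1 = h 1.
Proof. by rewrite concatR; [congr h; lra | lra]. Qed.

Lemma concat_comp {Y : topologicalType} (F : X -> Y) g h :
  F \o concat g h = concat (F \o g) (F \o h).
Proof. by apply/funext => t; rewrite /= /concat; case: ifP. Qed.

Lemma concat_eq_in g g' h h' :
  (forall t, I01 t -> g t = g' t) -> (forall t, I01 t -> h t = h' t) ->
  forall t, I01 t -> concat g h t = concat g' h' t.
Proof.
move=> gg' hh' t /I01P [? ?]; case: (lerP t (1/2)) => ht.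
  by rewrite !concatL // gg' //; apply/I01P; split; lra.
by rewrite !concatR // hh' //; apply/I01P; split; lra.
Qed.

Lemma concat_in (S : set X) g h :
  (forall t, I01 t -> S (g t)) -> (forall t, I01 t -> S (h t)) ->
  forall t, I01 t -> S (concat g h t).
Proof.
move=> Sg Sh t /I01P [? ?]; case: (lerP t (1/2)) => ht.
  by rewrite concatL //; apply: Sg; apply/I01P; split; lra.
by rewrite concatR //; apply: Sh; apply/I01P; split; lra.
Qed.

Lemma concat_path g h x y z :
  path_from_to g x y -> path_from_to h y z -> path_from_to (concat g h) x z.
Proof.
move=> [gp [g0 g1]] [hp [h0 h1]]; split; last by rewrite concat0 concat1.
rewrite /is_path I01_halves.
apply: (@paste_within R X _ _ _ (fun t => g (2 * t)) (fun t => h (2 * t - 1))).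
- exact: segment_closed.
- exact: segment_closed.
- apply: (subspace_continuous_comp (phi := fun t : R => 2 * t) gp); first by apply: continuous_subspaceT; cont.
  by move=> t /segmentP [? ?]; apply/I01P; split; lra.
- apply: (subspace_continuous_comp (phi := fun t : R => 2 * t - 1) hp); first by apply: continuous_subspaceT; cont.
  by move=> t /segmentP [? ?]; apply/I01P; split; lra.
- by move=> t /segmentP [? ?]; rewrite concatL.
- move=> t /segmentP [? ?]; case: (lerP t (1/2)) => ht; last by rewrite concatR.
  have -> : t = 1/2 by lra.
  have -> : 2 * (1/2) - 1 = 0 :> R by lra.
  rewrite concatL; last lra.
  by rewrite (_ : 2 * (1/2) = 1 :> R) ?g1 ?h0; last lra.
Qed.

End Concat.

Lemma path_comp {U V : topologicalType} (F : U -> V) (g : R -> U) x y :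
  continuous F -> path_from_to g x y -> path_from_to (F \o g) (F x) (F y).
Proof. by move=> cF [gp [g0 g1]]; split; [exact: continuous_comp_within | rewrite /= g0 g1]. Qed.

Lemma continuous_path {X : topologicalType} (g : R -> X) : continuous g -> is_path g.
Proof. exact: continuous_subspaceT. Qed.

Lemma homotopic_rel_eq_in {X : topologicalType} (g g' h h' : R -> X) :
  (forall t, I01 t -> g t = g' t) -> (forall t, I01 t -> h t = h' t) ->
  homotopic_rel g' h' -> homotopic_rel g h.
Proof.
move=> gg' hh' [H [cH [Hgh Hend]]]; exists H; split=> //; split=> [t It | s Is].
  by rewrite gg' // hh'; [exact: Hgh | exact: It].
by rewrite (gg' 0 I01_0) (gg' 1 I01_1); exact: Hend.
Qed.

Lemma homotopic_rel_refl {X : topologicalType} (g : R -> X) :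
  is_path g -> homotopic_rel g g.
Proof.
move=> gp; exists (fun z => g z.2); split; last by split.
apply: (subspace_continuous_comp (phi := snd) gp); last by move=> z [].
by apply: continuous_subspaceT; cont.
Qed.

Definition lerp2 (s : R) (x y : R * R) : R * R :=
  ((1 - s) * x.1 + s * y.1, (1 - s) * x.2 + s * y.2).
Arguments lerp2 : simpl never.

Lemma lerp2_0 x y : lerp2 0 x y = x.
Proof. by case: x => a b; rewrite /lerp2 /= subr0 !mul1r !mul0r !addr0. Qed.

Lemma lerp2_1 x y : lerp2 1 x y = y.
Proof. by case: y => a b; rewrite /lerp2 /= subrr !mul0r !mul1r !add0r. Qed.

Lemma lerp2_id s x : lerp2 s x x = x.
Proof. by case: x => a b; rewrite /lerp2 /= -!mulrDl subrK !mul1r. Qed.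

Lemma I01_lerp s a b : I01 s -> I01 a -> I01 b -> I01 ((1 - s) * a + s * b).
Proof. by move=> /I01P [? ?] /I01P [? ?] /I01P [? ?]; apply/I01P; split; nra. Qed.

Lemma square_lerp2 s x y : I01 s -> square x -> square y -> square (lerp2 s x y).
Proof. by move=> Is [? ?] [? ?]; split; apply: I01_lerp. Qed.

(* The straight-line homotopy from [a] to [b]; it fixes the endpoints as soon as
   [F] is constant on the segments from [a 0] to [b 0] and from [a 1] to [b 1]. *)
Lemma homotopic_rel_square {X : topologicalType} (F : R * R -> X) (a b : R -> R * R) :
  {within square, continuous F} -> is_path a -> is_path b ->
  (forall t, I01 t -> square (a t)) -> (forall t, I01 t -> square (b t)) ->
  (forall s, I01 s -> F (lerp2 s (a 0) (b 0)) = F (a 0)) ->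
  (forall s, I01 s -> F (lerp2 s (a 1) (b 1)) = F (a 1)) ->
  homotopic_rel (F \o a) (F \o b).
Proof.
move=> cF ap bp a_sq b_sq end0 end1.
have ca : continuous (fun z : R * R => a (clamp z.2)).
  exact: cont_comp (is_path_clamp ap) (cont_snd cont_id).
have cb : continuous (fun z : R * R => b (clamp z.2)).
  exact: cont_comp (is_path_clamp bp) (cont_snd cont_id).
exists (fun z => F (lerp2 z.1 (a (clamp z.2)) (b (clamp z.2)))); split; [|split].
- apply: (subspace_continuous_comp
    (phi := fun z : R * R => lerp2 z.1 (a (clamp z.2)) (b (clamp z.2))) cF).
    by apply: continuous_subspaceT; rewrite /lerp2; cont.
  move=> [s t] [Is It] /=; rewrite clamp_in01 //.
  by apply: square_lerp2 => //; [exact: a_sq | exact: b_sq].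
- by move=> t It /=; rewrite clamp_in01 // lerp2_0 lerp2_1.
- move=> s Is /=; rewrite !clamp_in01; [|exact: I01_1 | exact: I01_0].
  by rewrite end0 // end1.
Qed.

Lemma homotopic_concat_slide {X : topologicalType} (g h g' : R -> X) :
  homotopic_rel (concat g h) g' -> g 1 = h 0 ->
  exists H : R * R -> X, {within square, continuous H} /\
    (forall t, I01 t -> H (0, t) = g t /\ H (1, t) = g' t) /\
    (forall s, I01 s -> H (s, 0) = g 0 /\ H (s, 1) = h (clamp (2 * s))).
Proof.
move=> [K [cK [Kgh Kend]]] gh.
have K0 t : I01 t -> K (0, t) = concat g h t by move=> It; case: (Kgh t It).
pose phi (z : R * R) := (clamp (2 * z.1 - 1), z.2 * ((1 + clamp (2 * z.1)) / 2)).
exists (K \o phi); split; [|split].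
- apply: (subspace_continuous_comp cK); first by apply: continuous_subspaceT; rewrite /phi; cont.
  move=> [s t] /= [/I01P [? ?] /I01P [? ?]]; rewrite /phi /=.
  split; first exact: I01_clamp.
  have /I01P [c0 c1] := I01_clamp (2 * s).
  by move: (clamp (2 * s)) c0 c1 => c c0 c1; apply/I01P; split; nra.
- move=> t It; have /I01P [? ?] := It; rewrite /phi /=; clamp_simpl; split.
    rewrite K0; last by apply/I01P; split; lra.
    by rewrite concatL; [congr g; lra | lra].
  by have [_ <-] := Kgh t It; congr (K (_, _)); lra.
- move=> s /I01P [? ?]; rewrite /phi /= mul0r; split.
    by have [->] := Kend _ (I01_clamp (2 * s - 1)); rewrite concat0.
  case: (lerP s (1/2)) => hs; last first.
    have /Kend [_] : I01 (2 * s - 1) by apply/I01P; split; lra.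
    rewrite concat1 => K1; clamp_simpl; rewrite -K1.
    by congr (K (_, _)); lra.
  clamp_simpl; rewrite mul1r K0; last by apply/I01P; split; lra.
  case: (lerP ((1 + 2 * s) / 2) (1/2)) => hs'.
    rewrite concatL // (_ : 2 * s = 0); last lra.
    by rewrite -gh; congr g; lra.
  by rewrite concatR //; congr h; lra.
Qed.

Definition stack {X : topologicalType} (F1 F2 : R * R -> X) (z : R * R) : X :=
  concat (fun t => F1 (z.1, t)) (fun t => F2 (z.1, t)) z.2.

Section Stack.
Context {X : topologicalType} (F1 F2 : R * R -> X).
Hypothesis seam : forall s, I01 s -> F1 (s, 1) = F2 (s, 0).

Lemma stack_continuous :
  {within square, continuous F1} -> {within square, continuous F2} ->
  {within square, continuous (stack F1 F2)}.
Proof.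
move=> c1 c2.
have -> : square = (I01 `*` `[0, 1/2]%classic) `|` (I01 `*` `[1/2, 1]%classic).
  apply/seteqP; split=> -[s t] /=; rewrite !in_itv /=.
    move=> [Is /I01P [? ?]]; case: (lerP t (1/2)) => ?; [left | right];
      by split=> //; apply/andP; split; lra.
  by case=> -[Is /andP [? ?]]; split=> //; apply/I01P; split; lra.
apply: (@paste_within (R * R)%type X _ _ (stack F1 F2) (fun z => F1 (z.1, 2 * z.2)) (fun z => F2 (z.1, 2 * z.2 - 1))).
- by apply: closed_setX; [exact: segment_closed | exact: segment_closed].
- by apply: closed_setX; [exact: segment_closed | exact: segment_closed].
- apply: (subspace_continuous_comp (phi := fun z : R * R => (z.1, 2 * z.2)) c1).
    by apply: continuous_subspaceT; cont.
  by move=> [s t] /= [Is /segmentP [? ?]]; split=> //; apply/I01P; split; lra.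
- apply: (subspace_continuous_comp (phi := fun z : R * R => (z.1, 2 * z.2 - 1)) c2).
    by apply: continuous_subspaceT; cont.
  by move=> [s t] /= [Is /segmentP [? ?]]; split=> //; apply/I01P; split; lra.
- by move=> [s t] /= [Is /segmentP [? ?]]; rewrite /stack concatL.
- move=> [s t] /= [Is /segmentP [? ?]]; rewrite /stack /=.
  case: (lerP t (1/2)) => ht; last by rewrite concatR.
  have -> : t = 1/2 by lra.
  rewrite concatL; last lra.
  have -> : 2 * (1/2) - 1 = 0 :> R by lra.
  have -> : 2 * (1/2) = 1 :> R by lra.
  exact: seam.
Qed.

Lemma stack_lower s t : I01 t -> stack F1 F2 (s, t / 2) = F1 (s, t).
Proof. by move=> /I01P [? ?]; rewrite /stack concatL /=; [congr (F1 (_, _)); lra | lra]. Qed.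

Lemma stack_upper s t : I01 s -> I01 t -> stack F1 F2 (s, (1 + t) / 2) = F2 (s, t).
Proof.
move=> Is /I01P [? ?]; rewrite /stack /=.
case: (lerP ((1 + t) / 2) (1/2)) => ht; last by rewrite concatR //; congr (F2 (_, _)); lra.
have -> : t = 0 by lra.
rewrite concatL; last lra.
by rewrite -(seam Is); congr (F1 (_, _)); lra.
Qed.

End Stack.

Definition square_arc : R -> R * R :=
  concat (concat (fun u => (0 : R, u)) (fun u => (u, 1 : R))) (fun u => (1 : R, 1 - u)).

Lemma square_arc_path : path_from_to square_arc (0, 0) (1, 0).
Proof.
apply: (concat_path (y := (1, 1) : R * R)); first apply: (concat_path (y := (0, 1) : R * R)).
- by split; [apply: continuous_path; cont | split].
- by split; [apply: continuous_path; cont | split].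
- by split; [apply: continuous_path; cont | rewrite /= subr0 subrr].
Qed.

Lemma square_arc_sides u : I01 u ->
  exists2 t, I01 t & [\/ square_arc u = (0, t), square_arc u = (t, 1) | square_arc u = (1, t)].
Proof.
pose S (z : R * R) := exists2 t : R, I01 t & [\/ z = (0, t), z = (t, 1) | z = (1, t)].
move: u; apply: (concat_in (S := S)); first apply: (concat_in (S := S)).
- by move=> t It; exists t => //; apply: Or31.
- by move=> t It; exists t => //; apply: Or32.
move=> t /I01P [? ?]; exists (1 - t); last exact: Or33.
by apply/I01P; split; lra.
Qed.

Lemma square_arc_in u : I01 u -> square (square_arc u).
Proof.
move=> /square_arc_sides [t It [] ->]; split=> //; [exact: I01_0 | exact: I01_1 | exact: I01_1].
Qed.

(* If [F1] deforms [g] into [g'] with fixed start while its end runs along the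
   bottom edge of [F2], then [g] followed by the other three edges of [F2] is
   homotopic to [g']. *)
Lemma homotopic_rel_concat_square_arc {X : topologicalType} (F1 F2 : R * R -> X) (g g' : R -> X) :
  {within square, continuous F1} -> {within square, continuous F2} ->
  (forall s, I01 s -> F1 (s, 1) = F2 (s, 0)) ->
  (forall s, I01 s -> F1 (s, 0) = F1 (0, 0)) ->
  (forall t, I01 t -> F1 (0, t) = g t /\ F1 (1, t) = g' t) ->
  homotopic_rel (concat g (F2 \o square_arc)) g'.
Proof.
move=> c1 c2 seam bottom sides.
pose raise (z : R * R) : R * R := (z.1, (1 + z.2) / 2).
pose a : R -> R * R := concat (fun t => (0 : R, t / 2)) (raise \o square_arc).
pose b (t : R) : R * R := (1, t / 2).
have a0 : a 0 = (0, 0) by rewrite /a concat0 mul0r.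
have [_ [_ arc1]] := square_arc_path.
have a1 : a 1 = (1, 1 / 2) by rewrite /a concat1 /= arc1 /raise /= addr0.
have b0 : b 0 = (1, 0) by rewrite /b mul0r.
have b1 : b 1 = (1, 1 / 2) by [].
have sq_half t : I01 t -> I01 (t / 2) by move=> /I01P [? ?]; apply/I01P; split; lra.
have sq_raise t : I01 t -> I01 ((1 + t) / 2) by move=> /I01P [? ?]; apply/I01P; split; lra.
apply: (homotopic_rel_eq_in _ _
  (homotopic_rel_square (F := stack F1 F2) (a := a) (b := b) _ _ _ _ _ _ _)).
- move=> t It; rewrite /a [in RHS]concat_comp.
  apply: concat_eq_in It => u Iu /=; first by rewrite stack_lower //; have [->] := sides u Iu.
  have := square_arc_in Iu; case: (square_arc u) => x y [Ix Iy].
  by rewrite /raise /= stack_upper.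
- by move=> t It; rewrite /= stack_lower //; have [_ ->] := sides t It.
- exact: stack_continuous.
- have [ap _] : path_from_to a (0, 0 / 2) (raise (1, 0)).
    apply: (concat_path (y := raise (0, 0))); last first.
      by apply: path_comp square_arc_path; rewrite /raise; cont.
    split; first by apply: continuous_path; cont.
    by split; [| rewrite /raise /= addr0].
  exact: ap.
- by apply: continuous_path; rewrite /b; cont.
- apply: concat_in => t It; first by split; [exact: I01_0 | exact: sq_half].
  by have [? ?] := square_arc_in It; split=> //; exact: sq_raise.
- by move=> t It; split; [exact: I01_1 | exact: sq_half].
- move=> s Is; rewrite a0 b0 /lerp2 /=.
  have -> : ((1 - s) * 0 + s * 1, (1 - s) * 0 + s * 0) = (s, 0 / 2) by congr (_, _); lra.
  have -> : ((0 : R), (0 : R)) = (0, 0 / 2) by congr (_, _); lra.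
  by rewrite !stack_lower ?bottom //; exact: I01_0.
- by move=> s Is; rewrite a1 b1 lerp2_id.
Qed.

Definition back_forth {X : topologicalType} (g g' : R -> X) : R -> X :=
  concat (concat (fun t => g (1 - t)) (fun=> g 0)) g'.

Section BackForth.
Context {X : topologicalType} (g g' : R -> X).

Lemma back_forth_comp {Y : topologicalType} (F : X -> Y) :
  F \o back_forth g g' = back_forth (F \o g) (F \o g').
Proof. by rewrite /back_forth !concat_comp. Qed.

Lemma back_forth_path : is_path g -> is_path g' -> g 0 = g' 0 ->
  path_from_to (back_forth g g') (g 1) (g' 1).
Proof.
move=> gp g'p gg'; apply: (concat_path (y := g 0)); last by split=> //; split.
apply: (concat_path (y := g 0)); last by split; [apply: continuous_path; cont | split].
split; last by rewrite subr0 subrr.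
apply: (subspace_continuous_comp (phi := fun t : R => 1 - t) gp).
  by apply: continuous_subspaceT; cont.
by move=> t /I01P [? ?]; apply/I01P; split; lra.
Qed.

Lemma back_forth_back t : I01 t -> back_forth g g' ((1 - t) / 4) = g t.
Proof. by move=> /I01P [? ?]; rewrite /back_forth !concatL; [congr g | |]; lra. Qed.

Lemma back_forth_mid w : 1/4 <= w -> w <= 1/2 -> back_forth g g' w = g 0.
Proof.
move=> ? ?; rewrite /back_forth concatL //.
case: (lerP (2 * w) (1/2)) => ?; last by rewrite concatR.
by rewrite concatL //; congr g; lra.
Qed.

Lemma back_forth_forth t : g 0 = g' 0 -> I01 t -> back_forth g g' ((1 + t) / 2) = g' t.
Proof.
move=> gg' /I01P [? ?]; case: (lerP ((1 + t) / 2) (1/2)) => ?.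
  by rewrite back_forth_mid ?gg'; [congr g'| |]; lra.
by rewrite /back_forth concatR //; congr g'; lra.
Qed.

End BackForth.

(* Precompose the homotopy with a self-map of the square sending the bottom edge
   around the left, bottom and right edges (which spell [back_forth g g']) and
   the three other edges to the top edge, where the homotopy is constant. *)
Lemma homotopic_rel_fold {X : topologicalType} (g g' : R -> X) :
  homotopic_rel g g' ->
  exists M : R * R -> X, {within square, continuous M} /\
    (forall s, I01 s -> M (s, 0) = back_forth g g' s) /\
    (forall t, I01 t -> M (0, t) = g 1 /\ M (1, t) = g 1) /\
    (forall s, I01 s -> M (s, 1) = g 1).
Proof.
move=> [G [cG [Ggg' Gend]]].
have [arc_path [arc0 arc1]] := square_arc_path.
pose flip (z : R * R) : R * R := (z.1, 1 - z.2).
have carc : continuous (fun z : R * R => square_arc (clamp z.1)).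
  exact: cont_comp (is_path_clamp arc_path) (cont_fst cont_id).
exists (fun z => G (lerp2 z.2 (flip (square_arc (clamp z.1))) (z.1, 1))).
split; [|split; [|split]].
- apply: (subspace_continuous_comp
    (phi := fun z : R * R => lerp2 z.2 (flip (square_arc (clamp z.1))) (z.1, 1)) cG).
    by apply: continuous_subspaceT; rewrite /lerp2 /flip; cont.
  move=> [w s] [/= Iw /= Is]; rewrite clamp_in01 //.
  have [? /I01P [? ?]] := square_arc_in Iw.
  split; apply: I01_lerp => //; [apply/I01P; split; lra | exact: I01_1].
- move=> s Is /=; rewrite lerp2_0 clamp_in01 //.
  rewrite -[LHS]/(((G \o flip) \o square_arc) s) /square_arc !concat_comp /back_forth.
  move: s Is; apply: concat_eq_in; first apply: concat_eq_in.
  + move=> t /I01P [? ?] /=.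
    by have /Ggg' [-> _] : I01 (1 - t) by apply/I01P; split; lra.
  + by move=> t It; rewrite /flip /= subrr; have [->] := Gend t It.
  + move=> t It; rewrite /flip /= opprB addrC subrK.
    by have [_ ->] := Ggg' t It.
- move=> t It /=; rewrite (clamp_in01 I01_0) (clamp_in01 I01_1) arc0 arc1 /flip /=.
  rewrite subr0 !lerp2_id.
  by split; [have [_ ->] := Gend 0 I01_0 | have [_ ->] := Gend 1 I01_1].
- move=> s Is /=; rewrite lerp2_1.
  by have [_ ->] := Gend s Is.
Qed.

Lemma homotopic_rel_back_forth_square {X : topologicalType} (L : R * R -> X) (b b' : R -> X) :
  {within square, continuous L} -> b 0 = b' 0 ->
  (forall s, I01 s -> L (s, 0) = back_forth b b' s) ->
  homotopic_rel (concat b (L \o square_arc)) b'.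
Proof.
move=> cL bb' L0.
have Lback t : I01 t -> L ((1 - t) / 4, 0) = b t.
  by move=> It; rewrite L0 ?back_forth_back //; have /I01P [? ?] := It; apply/I01P; split; lra.
have Lforth t : I01 t -> L ((1 + t) / 2, 0) = b' t.
  by move=> It; rewrite L0 ?back_forth_forth //; have /I01P [? ?] := It; apply/I01P; split; lra.
have Lmid w : 1/4 <= w -> w <= 1/2 -> L (w, 0) = b 0.
  by move=> ? ?; rewrite L0 ?back_forth_mid //; apply/I01P; split; lra.
(* [phi] squeezes the square onto the stretch of the bottom edge of [L] that
   carries [b] backwards, a constant, and [b'] forwards. *)
pose phi (z : R * R) := lerp2 z.1 ((1 - z.2) / 4, 0) ((1 + z.2) / 2, 0).
have phiE s t : phi (s, t) = ((1 - s) * ((1 - t) / 4) + s * ((1 + t) / 2), 0).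
  by rewrite /phi /lerp2 /=; congr (_, _); lra.
apply: (homotopic_rel_concat_square_arc (F1 := L \o phi)) => //.
- apply: (subspace_continuous_comp cL).
    by apply: continuous_subspaceT; rewrite /phi /lerp2; cont.
  move=> [s t] [Is It]; rewrite phiE; move: Is It => /= /I01P [? ?] /I01P [? ?].
  by split; [apply/I01P; split; nra | exact: I01_0].
- move=> s /I01P [? ?]; rewrite /= phiE; congr (L (_, _)); lra.
- move=> s /I01P [? ?]; rewrite /= !phiE !Lmid //; nra.
- move=> t It; rewrite /= !phiE; split.
    by rewrite -Lback //; congr (L (_, _)); lra.
  by rewrite -Lforth //; congr (L (_, _)); lra.
Qed.

Section Fibration.
Context {Z X : topologicalType} (f : Z -> X).
Hypothesis fib : fibration f.

Lemma fibration_path_lift (g : R -> X) (p : Z) : is_path g -> g 0 = f p ->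
  exists c : R -> Z, [/\ is_path c, c 0 = p & forall t, I01 t -> f (c t) = g t].
Proof.
move=> gp g0.
have [L [cL [L0 fL]]] := @fib R (fun=> p) (fun z : R * R => g z.2) (cont_cst (c := p))
  (subspace_continuous_comp (phi := snd) gp (continuous_subspaceT (cont_snd cont_id))
    (fun z Iz => proj2 Iz)) (fun=> g0).
exists (fun t => L (0, t)); split; [|exact: L0 | by move=> t It; rewrite fL].
rewrite /is_path; apply: (subspace_continuous_comp (phi := fun t : R => (0 : R, t)) cL).
  by apply: continuous_subspaceT; cont.
by move=> t It; split.
Qed.

Lemma fibration_lift_square (star : X) (P : R -> Z) (M : R * R -> X) :
  is_path P -> {within square, continuous M} ->
  (forall s, I01 s -> M (s, 0) = f (P s)) ->
  (forall t, I01 t -> M (0, t) = star /\ M (1, t) = star) ->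
  (forall s, I01 s -> M (s, 1) = star) ->
  exists L : R * R -> Z, [/\ {within square, continuous L},
    forall s, I01 s -> L (s, 0) = P s &
    fibre_path f star (L \o square_arc) (P 0) (P 1)].
Proof.
move=> Pp cM M0 Msides Mtop.
have cMc : {within [set: R] `*` I01, continuous (fun z : R * R => M (clamp z.1, z.2))}.
  apply: (subspace_continuous_comp (phi := fun z : R * R => (clamp z.1, z.2)) cM).
    by apply: continuous_subspaceT; cont.
  by move=> [w t] [_ It]; split; [exact: I01_clamp | exact: It].
have [L [cL [L0 fL]]] := @fib R _ _ (is_path_clamp Pp) cMc (fun w => M0 _ (I01_clamp w)).
have L0' s : I01 s -> L (s, 0) = P s by move=> Is; rewrite L0 /= clamp_in01.
have [arc_path [arc0 arc1]] := square_arc_path.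
exists L; split=> //; first by apply: continuous_subspaceW cL => -[w t] [].
split; first split.
- apply: (subspace_continuous_comp cL) arc_path _ => u Iu.
  by have [_ ?] := square_arc_in Iu; split.
- by split; rewrite /= ?arc0 ?arc1 ?(L0' 0 I01_0) ?(L0' 1 I01_1).
move=> u /square_arc_sides [t It]; rewrite /=; case=> ->.
- by rewrite fL // (clamp_in01 I01_0); have [] := Msides t It.
- by rewrite fL ?clamp_in01 ?Mtop //; exact: I01_1.
- by rewrite fL // (clamp_in01 I01_1); have [] := Msides t It.
Qed.

End Fibration.

Section BisetOfFibration.
Context {Z X : topologicalType} (f : Z -> X) (dag : Z) (star : X).

Lemma beta_ok_lift (g : R -> X) : fibration f -> path_from_to g (f dag) star ->
  exists b : R -> Z, beta_ok f dag star b /\ homotopic_rel (f \o b) g.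
Proof.
move=> fib [gp [g0 g1]]; have [c [cp c0 fc]] := fibration_path_lift fib gp g0.
exists c; split; first by split=> //; split=> //; rewrite fc ?g1 //; exact: I01_1.
exact: homotopic_rel_eq_in fc (fun _ _ => erefl) (homotopic_rel_refl gp).
Qed.

Lemma beta_rel_homotopic (b b' : R -> Z) : continuous f ->
  beta_ok f dag star b -> beta_rel f star b b' -> homotopic_rel (f \o b) (f \o b').
Proof.
move=> cf [_ [_ fb1]] [e [[[_ [e0 _]] fe] K]].
have [H [cH [Hsides Hends]]] := homotopic_concat_slide K (esym e0).
exists (f \o H); split; first exact: continuous_comp_within.
split=> [t It | s Is] /=; first by have [-> ->] := Hsides t It.
by have [-> ->] := Hends s Is; rewrite fe ?fb1 //; exact: I01_clamp.
Qed.

Lemma homotopic_beta_rel (b b' : R -> Z) : fibration f ->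
  beta_ok f dag star b -> beta_ok f dag star b' ->
  homotopic_rel (f \o b) (f \o b') -> beta_rel f star b b'.
Proof.
move=> fib [bp [b0 fb1]] [b'p [b'0 _]] /homotopic_rel_fold [M [cM [M0 [Msides Mtop]]]].
have bb' : b 0 = b' 0 by rewrite b0 b'0.
have [bfp [bf0 bf1]] := back_forth_path bp b'p bb'.
have M0' s : I01 s -> M (s, 0) = f (back_forth b b' s).
  by move=> Is; rewrite M0 // -back_forth_comp.
have Msides' t : I01 t -> M (0, t) = star /\ M (1, t) = star.
  by rewrite -fb1; exact: Msides.
have Mtop' s : I01 s -> M (s, 1) = star by rewrite -fb1; exact: Mtop.
have [L [cL L0 e_fib]] := fibration_lift_square fib bfp cM M0' Msides' Mtop'.
exists (L \o square_arc); split; first by rewrite -bf0 -bf1.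
exact: homotopic_rel_back_forth_square cL bb' L0.
Qed.

End BisetOfFibration.

Section BisetOfCorrespondence.
Context {Z X Y : topologicalType} (f : Z -> X) (i : Z -> Y) (dag : Y) (star : X).
Hypothesis ci : continuous i.

Lemma triple_homotopic_pair (d : R -> Y) (p : Z) (g : R -> X) :
  fibration f -> triple_ok f i dag star d p g ->
  exists (d' : R -> Y) (p' : Z), pair_ok f i dag star d' p' /\
    triple_homotopic f i dag star d p g d' p' (fun _ => star).
Proof.
move=> fib [[dp [d0 d1]] [gp [g0 g1]]].
have [c [cp c0 fc]] := fibration_path_lift fib gp g0.
have icp : path_from_to (i \o c) (i p) (i (c 1)) by rewrite -c0; apply: path_comp.
have d'p := concat_path (conj dp (conj d0 d1)) icp.
have [H [cH [Hsides Hends]]] :=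
  homotopic_concat_slide (homotopic_rel_refl (proj1 d'p)) (etrans d1 (esym (proj1 (proj2 icp)))).
exists (concat d (i \o c)), (c 1); split.
  by split=> //; rewrite fc ?g1 //; exact: I01_1.
exists H, (fun s => c (clamp (2 * s))), (fun z => g (clamp (z.2 + 2 * z.1))).
split; first exact: cH.
split; [| split; [| split; [| split; [| split]]]].
- apply: (subspace_continuous_comp (phi := fun s : R => clamp (2 * s)) cp); last first.
    by move=> s _; exact: I01_clamp.
  by apply: continuous_subspaceT; cont.
- apply: (subspace_continuous_comp (phi := fun z : R * R => clamp (z.2 + 2 * z.1)) gp); last first.
    by move=> z _; exact: I01_clamp.
  by apply: continuous_subspaceT; cont.
- move=> t It; have [-> ->] := Hsides t It; have /I01P [? ?] := It; rewrite /=.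
  split; first by [].
  split; first by [].
  by clamp_simpl; split; [congr g; lra | exact: g1].
- by clamp_simpl; rewrite c0.
- by clamp_simpl.
- move=> s Is; have [-> ->] := Hends s Is; have /I01P [? ?] := Is; rewrite /= d0.
  split; first by [].
  split; first by [].
  split; last by clamp_simpl.
  by rewrite fc ?add0r //; exact: I01_clamp.
Qed.

Lemma pair_rel_triple_homotopic (d : R -> Y) (p : Z) (d' : R -> Y) (p' : Z) :
  pair_ok f i dag star d p -> pair_rel f i star d p d' p' ->
  triple_homotopic f i dag star d p (fun _ => star) d' p' (fun _ => star).
Proof.
move=> [[_ [d0 d1]] _] [e [[[ep [e0 e1]] fe] K]].
have [H [cH [Hsides Hends]]] := homotopic_concat_slide K (etrans d1 (congr1 i (esym e0))).
exists H, (fun s => e (clamp (2 * s))), (fun _ => star).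
split; first exact: cH.
split; [| split; [| split; [| split; [| split]]]].
- apply: (subspace_continuous_comp (phi := fun s : R => clamp (2 * s)) ep); last first.
    by move=> s _; exact: I01_clamp.
  by apply: continuous_subspaceT; cont.
- by apply: continuous_subspaceT; cont.
- by move=> t It; have [-> ->] := Hsides t It.
- by clamp_simpl; rewrite e0.
- by clamp_simpl.
- move=> s Is; have [-> ->] := Hends s Is; rewrite /= d0.
  split; first by [].
  split; first by [].
  by rewrite fe //; exact: I01_clamp.
Qed.

Lemma triple_homotopic_pair_rel (d : R -> Y) (p : Z) (d' : R -> Y) (p' : Z) :
  fibration f ->
  triple_homotopic f i dag star d p (fun _ => star) d' p' (fun _ => star) ->
  pair_rel f i star d p d' p'.
Proof.
move=> fib [Hd [P [Hg [cHd [Pp [cHg [Hsides [P0 [P1 Hends]]]]]]]]].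
have Hg0 s : I01 s -> Hg (s, 0) = f (P s) by move=> /Hends [_ [_ []]].
have Hg_sides t : I01 t -> Hg (0, t) = star /\ Hg (1, t) = star by move=> /Hsides [_ [_ []]].
have Hg1 s : I01 s -> Hg (s, 1) = star by move=> /Hends [_ [_ [_ ->]]].
have [L [cL L0 e_fib]] := fibration_lift_square fib Pp cHg Hg0 Hg_sides Hg1.
exists (L \o square_arc); split; first by rewrite -P0 -P1.
apply: (homotopic_rel_concat_square_arc (F1 := Hd) (F2 := i \o L)) => //.
- exact: continuous_comp_within.
- by move=> s Is; have [_ [-> _]] := Hends s Is; rewrite /= L0.
- by move=> s Is; have [-> _] := Hends s Is; have [-> _] := Hends 0 I01_0.
- by move=> t It; have [-> [-> _]] := Hsides t It.
Qed.

End BisetOfCorrespondence.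

Theorem mainTheorem15 :
  (* (1) B(f) for a fibration f : Z -> X: the map [beta] |-> [f o beta] is a
     bijection from the proposed quotient onto B(f). *)
  (forall (Z X : topologicalType) (f : Z -> X) (dag : Z) (star : X),
     continuous f -> fibration f ->
     (forall g : R -> X, path_from_to g (f dag) star ->
        exists b : R -> Z, beta_ok f dag star b /\ homotopic_rel (f \o b) g) /\
     (forall b b' : R -> Z, beta_ok f dag star b -> beta_ok f dag star b' ->
        (beta_rel f star b b' <-> homotopic_rel (f \o b) (f \o b')))) /\
  (* (2) B(f,i) for a correspondence (Z,f,i) from Y to X with f fibrant:
     gamma may be taken constant, and (delta,p) |-> [(delta,p,const)] is a
     bijection from the proposed quotient onto B(f,i). *)
  (forall (Z X Y : topologicalType) (f : Z -> X) (i : Z -> Y)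
          (dag : Y) (star : X),
     continuous f -> continuous i -> fibration f ->
     (forall (d : R -> Y) (p : Z) (g : R -> X), triple_ok f i dag star d p g ->
        exists (d' : R -> Y) (p' : Z), pair_ok f i dag star d' p' /\
          triple_homotopic f i dag star d p g d' p' (fun _ => star)) /\
     (forall (d : R -> Y) (p : Z) (d' : R -> Y) (p' : Z),
        pair_ok f i dag star d p -> pair_ok f i dag star d' p' ->
        (pair_rel f i star d p d' p' <->
         triple_homotopic f i dag star d p (fun _ => star) d' p' (fun _ => star)))).
Proof.
split=> [Z X f dag star cf fib | Z X Y f i dag star cf ci fib].
  split=> [g | b b' hb hb']; first exact: (beta_ok_lift fib).
  by split; [exact: (beta_rel_homotopic cf hb) | exact: (homotopic_beta_rel fib hb hb')].
split=> [d p g | d p d' p' hp _]; first exact: (triple_homotopic_pair ci fib).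
split; [exact: (pair_rel_triple_homotopic hp) | exact: (triple_homotopic_pair_rel ci fib)].
Qed.
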